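(* A convergence group $G$ is $g$-barrelled if and only if its locally quasi-convex modification $\tau(G)$ is $g$-barrelled.
   Context: All groups are abelian. A convergence group is an abelian group with a convergence structure (an assignment to each point $x$ of a collection of filters converging to $x$). This assignment must satisfy three conditions: point ultrafilters converge to their point; finite intersections of filters converging to $x$ converge to $x$; and finer filters converge. The group operation must be compatible: $\mathcal F\to x$, $\mathcal G\to y$ imply $\mathcal F-\mathcal G\to x-y$. Topological groups are convergence groups. $\mathbb T=\mathbb R/\mathbb Z$, $\mathbb T_+=\rho([-1/4,1/4])$ where $\rho:\mathbb R\to\mathbb T$ is the quotient map. $\Gamma G$ is the group of continuous homomorphisms $G\to\mathbb T$, and $\Gamma_s G$ is $\Gamma G$ with the topology of pointwise convergence. A set $M\subseteq\Gamma G$ is equicontinuous if for every filter $\mathcal F\to0$ in $G$, the filter generated by $\{\varphi(x):\varphi\in M,x\in F\}$, $F\in\mathcal F$, converges to $0$ in $\mathbb T$. A convergence group $G$ is $g$-barrelled if every compact subset of $\Gamma_s G$ is equicontinuous. A subset $A$ of a topological group $G$ is quasi-convex if for every $x\notin A$ there is a continuous character $\varphi$ with $\varphi(A)\subseteq\mathbb T_+$ and $\varphi(x)\notin\mathbb T_+$. A topological group is locally quasi-convex if it has a zero neighbourhood base of quasi-convex sets. The locally quasi-convex modification $\tau(G)$ of a convergence group $G$ is the finest locally quasi-convex group topology on $G$ coarser than the convergence structure of $G$. *)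

From Stdlib Require Import Reals List.
Open Scope R_scope.

Record AbGroup := {
  carrier :> Type;
  gadd : carrier -> carrier -> carrier;
  gopp : carrier -> carrier;
  gzero : carrier;
  gaddA : forall x y z, gadd x (gadd y z) = gadd (gadd x y) z;
  gaddC : forall x y, gadd x y = gadd y x;
  gadd0 : forall x, gadd gzero x = x;
  gaddN : forall x, gadd (gopp x) x = gzero
}.

Definition gsub (G : AbGroup) (x y : G) : G := gadd G x (gopp G y).

Definition filter_on (X : Type) := (X -> Prop) -> Prop.

Definition is_filter (X : Type) (F : filter_on X) : Prop :=
  F (fun _ => True) /\
  (forall A B : X -> Prop, F A -> (forall x, A x -> B x) -> F B) /\
  (forall A B : X -> Prop, F A -> F B -> F (fun x => A x /\ B x)) /\
  ~ F (fun _ => False).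

Definition point_filter (X : Type) (x : X) : filter_on X := fun A => A x.

Definition filter_inter (X : Type) (F H : filter_on X) : filter_on X :=
  fun A => F A /\ H A.

Definition finer (X : Type) (H F : filter_on X) : Prop :=
  forall A, F A -> H A.

Definition filter_sub (G : AbGroup) (F H : filter_on G) : filter_on G :=
  fun S => exists A B, F A /\ H B /\
           (forall a b, A a -> B b -> S (gsub G a b)).

Definition filter_image (X Y : Type) (f : X -> Y) (F : filter_on X)
  : filter_on Y :=
  fun S => exists A, F A /\ forall a, A a -> S (f a).

Definition convergence (X : Type) := filter_on X -> X -> Prop.

Definition is_conv_group (G : AbGroup) (lim : convergence G) : Prop :=
  (forall x : G, lim (point_filter G x) x) /\
  (forall (F H : filter_on G) x, is_filter G F -> is_filter G H ->
      lim F x -> lim H x -> lim (filter_inter G F H) x) /\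
  (forall (F H : filter_on G) x, is_filter G F -> is_filter G H ->
      lim F x -> finer G H F -> lim H x) /\
  (forall (F H : filter_on G) x y, is_filter G F -> is_filter G H ->
      lim F x -> lim H y -> lim (@filter_sub G F H) (gsub G x y)).

(** * The circle group T = R/Z, points represented by their
      representative in [0,1). *)
Definition tdist (r : R) : R := Rmin (frac_part r) (1 - frac_part r).

Definition tconv (F : filter_on R) (t : R) : Prop :=
  forall eps, 0 < eps ->
    exists A, F A /\ forall s, A s -> tdist (s - t) < eps.

Definition Tplus (r : R) : Prop := tdist r <= / 4.

(** continuous characters G -> T: a map phi with values in [0,1)
    (canonical representatives) such that phi (x+y) = phi x + phi y mod 1,
    continuous for the convergence structure. *)
Definition is_character (G : AbGroup) (lim : convergence G) (phi : G -> R)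
  : Prop :=
  (forall x, 0 <= phi x < 1) /\
  (forall x y, phi (gadd G x y) = frac_part (phi x + phi y)) /\
  (forall (F : filter_on G) x, is_filter G F -> lim F x ->
      tconv (filter_image G R phi F) (phi x)).

(** Compact subsets of Gamma_s G (pointwise convergence topology):
    every proper filter containing K has a cluster point in K. *)
Definition pw_nbhd (G : AbGroup) (psi : G -> R) (xs : list G) (eps : R)
  (chi : G -> R) : Prop :=
  forall x, In x xs -> tdist (chi x - psi x) < eps.

Definition compact_s (G : AbGroup) (lim : convergence G)
  (K : (G -> R) -> Prop) : Prop :=
  forall (FF : filter_on (G -> R)), is_filter (G -> R) FF -> FF K ->
    exists psi, K psi /\
      forall (xs : list G) eps (A : (G -> R) -> Prop), 0 < eps -> FF A ->
        exists chi, A chi /\ is_character G lim chi /\ pw_nbhd G psi xs eps chi.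

Definition equicontinuous (G : AbGroup) (lim : convergence G)
  (M : (G -> R) -> Prop) : Prop :=
  forall (F : filter_on G), is_filter G F -> lim F (gzero G) ->
    forall eps, 0 < eps ->
      exists A, F A /\ forall phi x, M phi -> A x -> tdist (phi x) < eps.

Definition gbarrelled (G : AbGroup) (lim : convergence G) : Prop :=
  forall K : (G -> R) -> Prop,
    (forall phi, K phi -> is_character G lim phi) ->
    compact_s G lim K -> equicontinuous G lim K.

Definition topology (X : Type) := (X -> Prop) -> Prop.

Definition top_lim (X : Type) (T : topology X) : convergence X :=
  fun F x => forall U, T U -> U x -> F U.

Definition is_group_topology (G : AbGroup) (T : topology G) : Prop :=
  T (fun _ => True) /\
  (forall U V, T U -> T V -> T (fun x => U x /\ V x)) /\
  (forall (I : Type) (Us : I -> G -> Prop), (forall i, T (Us i)) ->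
      T (fun x => exists i, Us i x)) /\
  (forall W x y, T W -> W (gsub G x y) ->
     exists U V, T U /\ T V /\ U x /\ V y /\
       forall a b, U a -> V b -> W (gsub G a b)).

Definition is_nbhd (X : Type) (T : topology X) (x : X) (U : X -> Prop)
  : Prop := exists V, T V /\ V x /\ forall y, V y -> U y.

Definition quasi_convex (G : AbGroup) (T : topology G) (A : G -> Prop)
  : Prop :=
  forall x, ~ A x ->
    exists phi, is_character G (top_lim G T) phi /\
      (forall a, A a -> Tplus (phi a)) /\ ~ Tplus (phi x).

Definition locally_quasi_convex (G : AbGroup) (T : topology G) : Prop :=
  is_group_topology G T /\
  forall U, is_nbhd G T (gzero G) U ->
    exists W, quasi_convex G T W /\ is_nbhd G T (gzero G) W /\
      forall y, W y -> U y.

Definition coarser_than_conv (G : AbGroup) (T : topology G)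
  (lim : convergence G) : Prop :=
  forall F x, is_filter G F -> lim F x -> top_lim G T F x.

Definition is_lqc_modification (G : AbGroup) (lim : convergence G)
  (T : topology G) : Prop :=
  locally_quasi_convex G T /\ coarser_than_conv G T lim /\
  forall T', locally_quasi_convex G T' -> coarser_than_conv G T' lim ->
    forall U, T' U -> T U.

From Stdlib Require Import Reals List Lra Lia ZArith Classical.
Open Scope R_scope.

(* For a set C of characters of G (maps G -> R that are additive
   modulo 1), the sets that contain a "C-uniform ball" around each of their
   points form a group topology topC on G: the topology of the pseudometric
   d(x, y) = sup_{phi in C} |phi (x - y)|_T.  It is locally quasi-convex: the
   closed ball of radius 1/2^(m+2) is quasi-convex, witnessed by the
   characters 2^j phi (j <= m), by a doubling argument on the circle.  If C is
   equicontinuous for the convergence structure lim, then topC is coarser than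
   lim, hence (by maximality) coarser than T = tau(G).  Taking C = {phi} shows
   that G and tau(G) have the same continuous characters; taking C = M shows
   that they have the same equicontinuous sets of characters (the converse
   inclusions hold since T is coarser than lim).  Since g-barrelledness only
   depends on these two data, the theorem follows. *)

(** * Arithmetic on the circle T = R/Z *)

Definition eqZ (r s : R) : Prop := exists n : Z, r = s + IZR n.

Lemma eqZ_refl r : eqZ r r.
Proof. exists 0%Z. ring. Qed.

Lemma eqZ_eq r s : r = s -> eqZ r s.
Proof. intros ->; apply eqZ_refl. Qed.

Lemma eqZ_sym r s : eqZ r s -> eqZ s r.
Proof. intros [n H]. exists (- n)%Z. rewrite opp_IZR. lra. Qed.

Lemma eqZ_trans r s t : eqZ r s -> eqZ s t -> eqZ r t.
Proof. intros [n H] [m H']. exists (m + n)%Z. rewrite plus_IZR. lra. Qed.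

Lemma eqZ_add r s r' s' : eqZ r s -> eqZ r' s' -> eqZ (r + r') (s + s').
Proof. intros [n H] [m H']. exists (n + m)%Z. rewrite plus_IZR. lra. Qed.

Lemma eqZ_sub r s r' s' : eqZ r s -> eqZ r' s' -> eqZ (r - r') (s - s').
Proof. intros [n H] [m H']. exists (n - m)%Z. rewrite minus_IZR. lra. Qed.

Lemma eqZ_mul k r s : eqZ r s -> eqZ (IZR k * r) (IZR k * s).
Proof. intros [n H]. exists (k * n)%Z. rewrite mult_IZR, H. ring. Qed.

Lemma frac_bounds r : 0 <= frac_part r < 1.
Proof. destruct (base_fp r); lra. Qed.

Lemma frac_eqZ r : eqZ (frac_part r) r.
Proof. exists (- Int_part r)%Z. unfold frac_part. rewrite opp_IZR. ring. Qed.

Lemma frac_unique r s : 0 <= s < 1 -> eqZ r s -> frac_part r = s.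
Proof.
  intros Hs Hr. pose proof (frac_bounds r) as Hb.
  destruct (eqZ_trans _ _ _ (frac_eqZ r) Hr) as [k Hk].
  assert (Hk0 : k = 0%Z).
  { assert (H1 : (-1 < k)%Z) by (apply lt_IZR; lra).
    assert (H2 : (k < 1)%Z) by (apply lt_IZR; lra). lia. }
  subst k. rewrite Hk. simpl. ring.
Qed.

Lemma tdist_le r n : tdist r <= Rabs (r - IZR n).
Proof.
  unfold tdist. pose proof (frac_bounds r) as Hb. unfold frac_part in *.
  set (k := (n - Int_part r)%Z).
  replace (r - IZR n) with ((r - IZR (Int_part r)) - IZR k)
    by (unfold k; rewrite minus_IZR; ring).
  destruct (Z_le_gt_dec k 0) as [Hk|Hk].
  - apply IZR_le in Hk. eapply Rle_trans; [apply Rmin_l|].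
    rewrite Rabs_right; lra.
  - assert (Hk1 : (1 <= k)%Z) by lia. apply IZR_le in Hk1.
    eapply Rle_trans; [apply Rmin_r|]. rewrite Rabs_left1; lra.
Qed.

Lemma tdist_ex r : exists n, tdist r = Rabs (r - IZR n).
Proof.
  unfold tdist. pose proof (frac_bounds r) as Hb. unfold frac_part in *.
  destruct (Rle_dec (r - IZR (Int_part r)) (1 - (r - IZR (Int_part r)))).
  - exists (Int_part r). rewrite Rmin_left by lra. rewrite Rabs_right; lra.
  - exists (Int_part r + 1)%Z. rewrite Rmin_right, plus_IZR by lra.
    rewrite Rabs_left1; lra.
Qed.

Lemma tdist_exact r m : Rabs (r - IZR m) <= / 2 -> tdist r = Rabs (r - IZR m).
Proof.
  intros Hm. apply Rle_antisym; [apply tdist_le|].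
  destruct (tdist_ex r) as [k Hk]. rewrite Hk.
  destruct (Z.eq_dec k m) as [->|Hkm]; [lra|].
  assert (Hgap : 1 <= Rabs (IZR k - IZR m)).
  { rewrite <- minus_IZR, <- abs_IZR. apply IZR_le. lia. }
  assert (Htri : Rabs (IZR k - IZR m) <= Rabs (r - IZR k) + Rabs (r - IZR m)).
  { replace (IZR k - IZR m) with (- (r - IZR k) + (r - IZR m)) by ring.
    eapply Rle_trans; [apply Rabs_triang|]. rewrite Rabs_Ropp. lra. }
  lra.
Qed.

Lemma tdist_nonneg r : 0 <= tdist r.
Proof. destruct (tdist_ex r) as [n ->]. apply Rabs_pos. Qed.

Lemma tdist_eqZ r s : eqZ r s -> tdist r = tdist s.
Proof.
  assert (Hle : forall a n, tdist (a + IZR n) <= tdist a).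
  { intros a n. destruct (tdist_ex a) as [m ->].
    eapply Rle_trans; [apply (tdist_le _ (m + n))|].
    rewrite plus_IZR. right; f_equal; ring. }
  intros [n ->]. apply Rle_antisym; [apply Hle|].
  replace s with (s + IZR n + IZR (- n)) at 1 by (rewrite opp_IZR; ring).
  apply Hle.
Qed.

Lemma tdist_add a b : tdist (a + b) <= tdist a + tdist b.
Proof.
  destruct (tdist_ex a) as [n ->]; destruct (tdist_ex b) as [m ->].
  eapply Rle_trans; [apply (tdist_le _ (n + m))|]. rewrite plus_IZR.
  replace (a + b - (IZR n + IZR m)) with ((a - IZR n) + (b - IZR m)) by ring.
  apply Rabs_triang.
Qed.

Lemma tdist_mul k r : tdist (IZR k * r) <= Rabs (IZR k) * tdist r.
Proof.
  destruct (tdist_ex r) as [n ->].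
  eapply Rle_trans; [apply (tdist_le _ (k * n))|]. rewrite mult_IZR.
  rewrite <- Rabs_mult. right; f_equal; ring.
Qed.

Lemma tdist_opp a : tdist (- a) = tdist a.
Proof.
  assert (Hneg : forall b, tdist (- b) <= tdist b).
  { intros b. replace (- b) with (IZR (-1) * b) by (simpl; ring).
    eapply Rle_trans; [apply tdist_mul|].
    rewrite Rabs_left by lra.
    lra. }
  apply Rle_antisym; [apply Hneg|].
  rewrite <- (Ropp_involutive a) at 1. apply Hneg.
Qed.

Lemma tdist_sub a b : tdist (a - b) <= tdist a + tdist b.
Proof. unfold Rminus. rewrite <- (tdist_opp b). apply tdist_add. Qed.

Lemma tdist_0 : tdist 0 = 0.
Proof.
  apply Rle_antisym; [|apply tdist_nonneg].
  eapply Rle_trans; [apply (tdist_le _ 0)|]. rewrite Rminus_0_r, Rabs_R0; lra.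
Qed.

Lemma tdist_double r : tdist r <= / 4 -> tdist (2 * r) = 2 * tdist r.
Proof.
  intros Hr. destruct (tdist_ex r) as [n Hn]. rewrite Hn in *.
  assert (Hd : Rabs (2 * r - IZR (2 * n)) = 2 * Rabs (r - IZR n)).
  { rewrite mult_IZR.
    replace (2 * r - IZR 2 * IZR n) with (2 * (r - IZR n)) by (simpl; ring).
    rewrite Rabs_mult, Rabs_right by lra. reflexivity. }
  rewrite (tdist_exact _ (2 * n)); lra.
Qed.

Lemma pow2_pos j : 0 < 2 ^ j.
Proof. apply pow_lt; lra. Qed.

(** If 2^j t lies in T_+ for all j <= m, then t is 1/2^(m+2)-close to 0:
    this is what makes small balls quasi-convex. *)
Lemma doubling m : forall t,
  (forall j, (j <= m)%nat -> tdist (2 ^ j * t) <= / 4) ->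
  tdist t <= / 2 ^ (m + 2).
Proof.
  induction m as [|m IH]; intros t H.
  - specialize (H 0%nat (le_n _)). simpl in *. rewrite Rmult_1_l in H. lra.
  - assert (H0 := H 0%nat ltac:(lia)). simpl in H0. rewrite Rmult_1_l in H0.
    assert (H2 : tdist (2 * t) <= / 2 ^ (m + 2)).
    { apply IH. intros j Hj. specialize (H (S j) ltac:(lia)). simpl in H.
      replace (2 ^ j * (2 * t)) with (2 * 2 ^ j * t) by ring. exact H. }
    rewrite tdist_double in H2 by exact H0.
    replace (S m + 2)%nat with (S (m + 2)) by lia. simpl.
    pose proof (pow2_pos (m + 2)). rewrite Rinv_mult. lra.
Qed.

Lemma small_pow r : 0 < r -> exists m, / 2 ^ (m + 2) <= r.
Proof.
  intros Hr.
  destruct (pow_lt_1_zero (/2) ltac:(rewrite Rabs_right; lra) r Hr) as [N HN].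
  exists N. specialize (HN (N + 2)%nat ltac:(lia)).
  rewrite Rabs_right in HN by (apply Rle_ge, pow_le; lra).
  rewrite pow_inv in HN. lra.
Qed.

Lemma gsub_addK (G : AbGroup) (u v : G) : gadd G (gsub G u v) v = u.
Proof.
  unfold gsub. rewrite <- gaddA, gaddN, gaddC. apply gadd0.
Qed.

Lemma gsubxx (G : AbGroup) (x : G) : gsub G x x = gzero G.
Proof. unfold gsub. rewrite gaddC. apply gaddN. Qed.

Definition additive_mod1 (G : AbGroup) (phi : G -> R) : Prop :=
  forall x y, phi (gadd G x y) = frac_part (phi x + phi y).

Section Additive.
Variables (G : AbGroup) (phi : G -> R).
Hypothesis Hphi : additive_mod1 G phi.

Lemma add_mod1 x y : eqZ (phi (gadd G x y)) (phi x + phi y).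
Proof. rewrite Hphi. apply frac_eqZ. Qed.

Lemma sub_mod1 u v : eqZ (phi (gsub G u v)) (phi u - phi v).
Proof.
  destruct (add_mod1 (gsub G u v) v) as [n E]. rewrite gsub_addK in E.
  exists (- n)%Z. rewrite opp_IZR. lra.
Qed.

Lemma zero_mod1 : eqZ (phi (gzero G)) 0.
Proof.
  rewrite <- (gsubxx G (gzero G)). eapply eqZ_trans; [apply sub_mod1|].
  apply eqZ_eq; ring.
Qed.

Lemma tdist_sub0 z : tdist (phi (gsub G z (gzero G))) = tdist (phi z).
Proof.
  apply tdist_eqZ. eapply eqZ_trans; [apply sub_mod1|].
  eapply eqZ_trans; [apply eqZ_sub; [apply eqZ_refl|apply zero_mod1]|].
  apply eqZ_eq; ring.
Qed.

Lemma tdist_subxx z : tdist (phi (gsub G z z)) = 0.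
Proof. rewrite gsubxx, (tdist_eqZ _ 0) by apply zero_mod1. apply tdist_0. Qed.

Lemma tdist_triangle y a c :
  tdist (phi (gsub G y c)) <= tdist (phi (gsub G y a)) + tdist (phi (gsub G a c)).
Proof.
  rewrite (tdist_eqZ _ (phi (gsub G y a) + phi (gsub G a c))); [apply tdist_add|].
  eapply eqZ_trans; [apply sub_mod1|]. apply eqZ_sym.
  eapply eqZ_trans; [apply eqZ_add; apply sub_mod1|]. apply eqZ_eq; ring.
Qed.

Lemma tdist_subsub a b x y :
  tdist (phi (gsub G (gsub G a b) (gsub G x y))) <=
  tdist (phi (gsub G a x)) + tdist (phi (gsub G b y)).
Proof.
  rewrite (tdist_eqZ _ (phi (gsub G a x) - phi (gsub G b y))); [apply tdist_sub|].
  eapply eqZ_trans; [apply sub_mod1|].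
  eapply eqZ_trans; [apply eqZ_sub; apply sub_mod1|]. apply eqZ_sym.
  eapply eqZ_trans; [apply eqZ_sub; apply sub_mod1|]. apply eqZ_eq; ring.
Qed.

Lemma multiple_additive k :
  additive_mod1 G (fun z => frac_part (IZR k * phi z)).
Proof.
  intros x y. apply frac_unique; [apply frac_bounds|].
  eapply eqZ_trans; [apply eqZ_mul, add_mod1|]. apply eqZ_sym.
  eapply eqZ_trans; [apply frac_eqZ|].
  eapply eqZ_trans; [apply eqZ_add; apply frac_eqZ|]. apply eqZ_eq; ring.
Qed.

End Additive.

Lemma character_additive (G : AbGroup) lim phi :
  is_character G lim phi -> additive_mod1 G phi.
Proof. intros [_ [H _]]. exact H. Qed.

(** Every filter converging for lim1 converges (to the same point) for lim2,
    i.e. lim2 is coarser than lim1. *)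
Definition conv_sub (G : AbGroup) (lim1 lim2 : convergence G) : Prop :=
  forall F x, is_filter G F -> lim1 F x -> lim2 F x.

Lemma top_lim_mono (G : AbGroup) (T1 T2 : topology G) :
  (forall U, T1 U -> T2 U) -> conv_sub G (top_lim G T2) (top_lim G T1).
Proof. intros H F x _ Hl U HU. apply Hl, H, HU. Qed.

Lemma character_mono (G : AbGroup) lim1 lim2 phi :
  conv_sub G lim1 lim2 -> is_character G lim2 phi -> is_character G lim1 phi.
Proof.
  intros Hs [H1 [H2 H3]]. split; [exact H1|split; [exact H2|]].
  intros F x HF Hl. apply H3, Hs; auto.
Qed.

Lemma equicontinuous_mono (G : AbGroup) lim1 lim2 M :
  conv_sub G lim1 lim2 -> equicontinuous G lim2 M -> equicontinuous G lim1 M.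
Proof. intros Hs HM F HF Hl. apply HM, Hs; auto. Qed.

Lemma compact_s_mono (G : AbGroup) lim1 lim2 K :
  (forall chi, is_character G lim1 chi -> is_character G lim2 chi) ->
  compact_s G lim1 K -> compact_s G lim2 K.
Proof.
  intros Hch HK FF HFF HFK. destruct (HK FF HFF HFK) as [psi [Kpsi Hpsi]].
  exists psi. split; [exact Kpsi|]. intros xs eps A He HA.
  destruct (Hpsi xs eps A He HA) as [chi [Achi [Cchi Nchi]]].
  exists chi. auto.
Qed.

Lemma gbarrelled_transfer (G : AbGroup) lim1 lim2 :
  (forall phi, is_character G lim1 phi <-> is_character G lim2 phi) ->
  (forall M, (forall phi, M phi -> is_character G lim1 phi) ->
     equicontinuous G lim1 M <-> equicontinuous G lim2 M) ->
  gbarrelled G lim1 <-> gbarrelled G lim2.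
Proof.
  intros Hch Heq. split; intros Hb K HK Hc.
  - assert (HK1 : forall phi, K phi -> is_character G lim1 phi)
      by (intros phi Kp; apply Hch, HK, Kp).
    apply Heq, Hb; [exact HK1|exact HK1|].
    apply (compact_s_mono G lim2); [intros chi; apply Hch|exact Hc].
  - apply Heq; [exact HK|]. apply Hb.
    + intros phi Kp. apply Hch, HK, Kp.
    + apply (compact_s_mono G lim1); [intros chi; apply Hch|exact Hc].
Qed.

Lemma point_filter_is (G : AbGroup) (x : G) : is_filter G (point_filter G x).
Proof. unfold point_filter. split; [exact I|split; [|split]]; auto. Qed.

Lemma filter_sub_point_is (G : AbGroup) F x : is_filter G F ->
  is_filter G (filter_sub G F (point_filter G x)).
Proof.
  intros [H1 [H2 [H3 H4]]]. unfold filter_sub, point_filter.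
  split; [|split; [|split]].
  - exists (fun _ => True), (fun _ => True). auto.
  - intros A B [A1 [B1 [HA [HB Hab]]]] HAB. exists A1, B1. auto.
  - intros A B [A1 [B1 [HA [HB Hab]]]] [A2 [B2 [HA' [HB' Hab']]]].
    exists (fun z => A1 z /\ A2 z), (fun z => B1 z /\ B2 z).
    split; [apply H3; auto|]. split; [auto|]. intros a b [] []; split; auto.
  - intros [A [B [HA [HB Hab]]]]. apply H4. apply (H2 A); auto.
    intros a Ha. exact (Hab a x Ha HB).
Qed.

(** * The topology of uniform closeness on a set C of characters *)

Section UniformTopology.
Variables (G : AbGroup) (C : (G -> R) -> Prop).
Hypothesis HC : forall phi, C phi -> additive_mod1 G phi.

Definition topC : topology G := fun U => forall x, U x -> exists r, 0 < r /\
  forall y, (forall phi, C phi -> tdist (phi (gsub G y x)) <= r) -> U y.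

(** Open ball of centre c and radius r for the pseudometric
    sup_{phi in C} tdist (phi (a - c)). *)
Definition ballC (c : G) (r : R) (a : G) : Prop := exists s, 0 < s /\
  forall phi, C phi -> tdist (phi (gsub G a c)) + s <= r.

Lemma ball_open c r : topC (ballC c r).
Proof.
  intros x [s [Hs Hx]]. exists (s / 2). split; [lra|].
  intros y Hy. exists (s / 2). split; [lra|]. intros phi Hp.
  pose proof (tdist_triangle G phi (HC phi Hp) y x c).
  specialize (Hy phi Hp). specialize (Hx phi Hp). lra.
Qed.

Lemma ball_center c r : 0 < r -> ballC c r c.
Proof.
  intros Hr. exists r. split; [exact Hr|]. intros phi Hp.
  rewrite tdist_subxx by auto. lra.
Qed.

Lemma ball_le c r a :
  ballC c r a -> forall phi, C phi -> tdist (phi (gsub G a c)) <= r.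
Proof. intros [s [Hs H]] phi Hp. specialize (H phi Hp). lra. Qed.

Lemma topC_group : is_group_topology G topC.
Proof.
  split; [|split; [|split]].
  - intros x _. exists 1. split; [lra|]. auto.
  - intros U V HU HV x [Ux Vx].
    destruct (HU x Ux) as [r1 [H1 K1]]. destruct (HV x Vx) as [r2 [H2 K2]].
    exists (Rmin r1 r2). split; [apply Rmin_pos; auto|].
    pose proof (Rmin_l r1 r2). pose proof (Rmin_r r1 r2).
    intros y Hy. split; [apply K1|apply K2]; intros phi Hp;
      specialize (Hy phi Hp); lra.
  - intros I Us HUs x [i Hi]. destruct (HUs i x Hi) as [r [Hr K]].
    exists r. split; auto. intros y Hy. exists i. auto.
  - intros W x y HW Hxy. destruct (HW _ Hxy) as [r [Hr K]].
    exists (ballC x (r / 2)), (ballC y (r / 2)).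
    split; [apply ball_open|]. split; [apply ball_open|].
    split; [apply ball_center; lra|]. split; [apply ball_center; lra|].
    intros a b Ha Hb. apply K. intros phi Hp.
    pose proof (tdist_subsub G phi (HC phi Hp) a b x y).
    pose proof (ball_le _ _ _ Ha phi Hp). pose proof (ball_le _ _ _ Hb phi Hp).
    lra.
Qed.

Lemma topC_character chi phi L : C phi -> 0 < L ->
  (forall x, 0 <= chi x < 1) -> additive_mod1 G chi ->
  (forall z, tdist (chi z) <= L * tdist (phi z)) ->
  is_character G (top_lim G topC) chi.
Proof.
  intros Hp HL Hb Ha Hdom. split; [exact Hb|split; [exact Ha|]].
  intros F x HF Hl eps Heps.
  exists (fun s => tdist (s - chi x) < eps). split; [|auto].
  exists (ballC x (eps / (2 * L))). split.
  - apply Hl; [apply ball_open|apply ball_center].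
    apply Rdiv_lt_0_compat; lra.
  - intros a Hball.
    rewrite <- (tdist_eqZ _ _ (sub_mod1 G chi Ha a x)).
    pose proof (ball_le _ _ _ Hball phi Hp) as Hr.
    eapply Rle_lt_trans; [apply Hdom|].
    apply Rle_lt_trans with (L * (eps / (2 * L))).
    + apply Rmult_le_compat_l; lra.
    + replace (L * (eps / (2 * L))) with (eps / 2) by (field; lra). lra.
Qed.

Lemma tdist_pow2 j t : tdist (2 ^ j * t) <= 2 ^ j * tdist t.
Proof.
  rewrite pow_IZR. eapply Rle_trans; [apply tdist_mul|].
  rewrite Rabs_right; [lra|]. rewrite <- pow_IZR. left; apply pow2_pos.
Qed.

Lemma power_character phi j : C phi ->
  is_character G (top_lim G topC) (fun z => frac_part (2 ^ j * phi z)).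
Proof.
  intros Hp. apply (topC_character _ phi (2 ^ j) Hp (pow2_pos j)).
  - intros x. apply frac_bounds.
  - rewrite pow_IZR. apply multiple_additive, HC, Hp.
  - intros z. rewrite (tdist_eqZ _ _ (frac_eqZ _)). apply tdist_pow2.
Qed.

Lemma closed_ball_quasi_convex m : quasi_convex G topC
  (fun z => forall phi, C phi -> tdist (phi z) <= / 2 ^ (m + 2)).
Proof.
  intros x Hx. apply not_all_ex_not in Hx. destruct Hx as [phi Hx].
  apply imply_to_and in Hx. destruct Hx as [Hp Hx].
  assert (Hj : exists j, (j <= m)%nat /\ ~ tdist (2 ^ j * phi x) <= / 4).
  { apply NNPP. intros Hn. apply Hx, doubling. intros j Hj.
    apply NNPP. intros Hc. apply Hn. exists j. auto. }
  destruct Hj as [j [Hjm Hj]].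
  exists (fun z => frac_part (2 ^ j * phi z)).
  split; [apply power_character, Hp|]. unfold Tplus.
  split; [intros a Ha|]; rewrite (tdist_eqZ _ _ (frac_eqZ _)); [|exact Hj].
  assert (Hpow : 2 ^ (m + 2) = 4 * 2 ^ m) by (rewrite pow_add; simpl; ring).
  assert (Hjm' : 2 ^ j <= 2 ^ m) by (apply Rle_pow; [lra|lia]).
  pose proof (pow2_pos m). pose proof (tdist_nonneg (phi a)).
  specialize (Ha phi Hp). rewrite Hpow in Ha.
  eapply Rle_trans; [apply tdist_pow2|].
  apply Rle_trans with (2 ^ m * / (4 * 2 ^ m)).
  - apply Rmult_le_compat; [left; apply pow2_pos|lra|lra|exact Ha].
  - right. field. lra.
Qed.

Lemma topC_lqc : locally_quasi_convex G topC.
Proof.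
  split; [apply topC_group|].
  intros U [V [HV [V0 VU]]].
  destruct (HV _ V0) as [r [Hr K]]. destruct (small_pow r Hr) as [m Hm].
  pose proof (pow2_pos (m + 2)) as Hpos.
  exists (fun z => forall phi, C phi -> tdist (phi z) <= / 2 ^ (m + 2)).
  split; [apply closed_ball_quasi_convex|split].
  - exists (ballC (gzero G) (/ 2 ^ (m + 2))).
    split; [apply ball_open|]. split; [apply ball_center, Rinv_0_lt_compat, Hpos|].
    intros y Hy phi Hp. rewrite <- tdist_sub0 by auto. apply (ball_le _ _ _ Hy _ Hp).
  - intros y Hy. apply VU, K. intros phi Hp.
    rewrite tdist_sub0 by auto. specialize (Hy phi Hp). lra.
Qed.

Lemma topC_equicontinuous : equicontinuous G (top_lim G topC) C.
Proof.
  intros F HF Hl eps Heps. exists (ballC (gzero G) (eps / 2)). split.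
  - apply Hl; [apply ball_open|apply ball_center; lra].
  - intros phi x Hp Hx. pose proof (ball_le _ _ _ Hx phi Hp) as Hd.
    rewrite tdist_sub0 in Hd by auto. lra.
Qed.

Lemma topC_coarser lim : is_conv_group G lim -> equicontinuous G lim C ->
  conv_sub G lim (top_lim G topC).
Proof.
  intros [G1 [_ [_ G4]]] HE F x HF Hl U HU Ux.
  destruct (HU x Ux) as [r [Hr K]].
  pose proof (G4 F (point_filter G x) x x HF (point_filter_is G x) Hl (G1 x))
    as Hl0.
  rewrite gsubxx in Hl0.
  destruct (HE _ (filter_sub_point_is G F x HF) Hl0 r Hr)
    as [A' [[A [B [HA [HB Hab]]]] HA']].
  destruct HF as [_ [Hmono _]]. apply (Hmono A); [exact HA|].
  intros a Ha. apply K. intros phi Hp. left. apply HA'; auto.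
Qed.

End UniformTopology.

(** * A convergence group and its locally quasi-convex modification *)

Section Modification.
Variables (G : AbGroup) (lim : convergence G) (T : topology G).
Hypotheses (HG : is_conv_group G lim) (HT : is_lqc_modification G lim T).

Lemma modification_coarser : conv_sub G lim (top_lim G T).
Proof. destruct HT as [_ [Hc _]]. exact Hc. Qed.

Lemma topC_open_modification C :
  (forall phi, C phi -> additive_mod1 G phi) -> equicontinuous G lim C ->
  forall U, topC G C U -> T U.
Proof.
  intros HC HE. destruct HT as [_ [_ Hmax]]. apply Hmax.
  - apply topC_lqc, HC.
  - apply topC_coarser; assumption.
Qed.

Lemma character_singleton_equicontinuous phi : is_character G lim phi ->
  equicontinuous G lim (fun psi => psi = phi).
Proof.
  intros Hc F HF Hl eps Heps. pose proof (character_additive _ _ _ Hc) as Ha.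
  destruct Hc as [_ [_ Hcont]].
  destruct (Hcont F (gzero G) HF Hl eps Heps) as [A' [[A [HA HAA]] HA']].
  exists A. split; [exact HA|]. intros psi x -> Hx.
  specialize (HA' _ (HAA x Hx)).
  rewrite (tdist_eqZ _ (phi x)) in HA'; [exact HA'|].
  eapply eqZ_trans; [apply eqZ_sub; [apply eqZ_refl|apply zero_mod1, Ha]|].
  apply eqZ_eq; ring.
Qed.

Lemma modification_character phi :
  is_character G lim phi <-> is_character G (top_lim G T) phi.
Proof.
  split; [intros Hc|apply character_mono, modification_coarser].
  set (C := fun psi : G -> R => psi = phi).
  assert (HC : forall psi, C psi -> additive_mod1 G psi)
    by (intros psi ->; apply (character_additive _ _ _ Hc)).
  apply (character_mono _ _ (top_lim G (topC G C))).
  - apply top_lim_mono, topC_open_modification;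
      [exact HC|apply character_singleton_equicontinuous, Hc].
  - destruct Hc as [Hb [Ha _]].
    apply (topC_character G C HC phi phi 1 eq_refl); [lra|exact Hb|exact Ha|].
    intros z. lra.
Qed.

Lemma modification_equicontinuous M :
  (forall phi, M phi -> is_character G lim phi) ->
  equicontinuous G lim M <-> equicontinuous G (top_lim G T) M.
Proof.
  intros HM. split; [intros HE|apply equicontinuous_mono, modification_coarser].
  assert (HMa : forall phi, M phi -> additive_mod1 G phi)
    by (intros phi Hp; apply (character_additive _ lim), HM, Hp).
  apply (equicontinuous_mono _ _ (top_lim G (topC G M))).
  - apply top_lim_mono, topC_open_modification; assumption.
  - apply topC_equicontinuous, HMa.
Qed.

End Modification.

Theorem corollary2p12 (G : AbGroup) (lim : convergence G)
  (HG : is_conv_group G lim) (T : topology G)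
  (HT : is_lqc_modification G lim T) :
  gbarrelled G lim <-> gbarrelled G (top_lim G T).
Proof.
  apply gbarrelled_transfer.
  - apply modification_character; assumption.
  - apply modification_equicontinuous; assumption.
Qed.
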